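(* On $\mathbb R^2$ with the Euclidean metric, let $\phi(x,y)=\frac14(x^4+y^4)$ and $X=(x^3+x^2y^2)\partial_x+y^3\partial_y$. Then there exist a neighbourhood $U$ of the origin and a constant $\delta>0$ with $d\phi(X)\ge\delta(|X|^2+|d\phi|^2)$ on $U$, but on no neighbourhood $U'$ of the origin does there exist a smooth $(2,0)$ tensor field $g$ with $g(v,v)>0$ for all $v\ne0$ and $d\phi=g(X,\cdot)$ on $U'$. *)

From Stdlib Require Import Reals List.
From Coquelicot Require Import Coquelicot.
Open Scope R_scope.

Definition pt := (R * R)%type.

Definition pdx (f : pt -> R) : pt -> R := fun p => Derive (fun t => f (t, snd p)) (fst p).
Definition pdy (f : pt -> R) : pt -> R := fun p => Derive (fun t => f (fst p, t)) (snd p).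

Fixpoint iter_pd (ds : list bool) (f : pt -> R) : pt -> R :=
  match ds with
  | nil => f
  | d :: ds' => (if d then pdy else pdx) (iter_pd ds' f)
  end.

(* Continuity of f : R^2 -> R at p (product / sup-norm topology = Euclidean). *)
Definition cont_at2 (f : pt -> R) (p : pt) : Prop :=
  forall eps, 0 < eps -> exists d, 0 < d /\ forall q : pt,
    Rabs (fst q - fst p) < d -> Rabs (snd q - snd p) < d -> Rabs (f q - f p) < eps.

Definition open2 (U : pt -> Prop) : Prop :=
  forall p, U p -> exists r, 0 < r /\ forall q : pt,
    Rabs (fst q - fst p) < r -> Rabs (snd q - snd p) < r -> U q.

(* f is smooth (C^infinity) on the open set U: every iterated partial
   derivative of every order exists on U and is continuous on U
   (continuous partials of all orders <=> C^infinity). *)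
Definition smooth_on (U : pt -> Prop) (f : pt -> R) : Prop :=
  forall (ds : list bool) (p : pt), U p ->
    cont_at2 (iter_pd ds f) p /\
    ex_derive (fun t => iter_pd ds f (t, snd p)) (fst p) /\
    ex_derive (fun t => iter_pd ds f (fst p, t)) (snd p).

Definition phi (p : pt) : R := / 4 * ((fst p) ^ 4 + (snd p) ^ 4).

Definition dphi1 : pt -> R := pdx phi.
Definition dphi2 : pt -> R := pdy phi.

Definition X1 (p : pt) : R := (fst p) ^ 3 + (fst p) ^ 2 * (snd p) ^ 2.
Definition X2 (p : pt) : R := (snd p) ^ 3.

Definition gform (g11 g12 g21 g22 : pt -> R) (p : pt) (v1 v2 w1 w2 : R) : R :=
  g11 p * v1 * w1 + g12 p * v1 * w2 + g21 p * v2 * w1 + g22 p * v2 * w2.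

From Stdlib Require Import Reals List Lra Psatz.
From Coquelicot Require Import Coquelicot.
Open Scope R_scope.

(* Near 0, with a = x^2 and b = y^2, both d phi (X) and |X|^2 + |d phi|^2 are comparable
   to a^3 + b^3, which gives the first claim.  For the second, the x-component of
   d phi = g(X, .) reads x^3 = g11 (x^3 + x^2 y^2) + g21 y^3.  Evaluating it at x = 0 and
   x = +-y^2 (X1 vanishes at x = -y^2) shows that the second difference of g21(., y) with
   step y^2 equals -2 y^3 g11(y^2, y).  Since g21 is C^2 this second difference is
   O(y^4), so g11(y^2, y) = O(y), contradicting g11(0,0) > 0. *)

Section SecondDifference.

Variables (f f' f'' : R -> R) (h M : R).
Hypothesis f_C2 : forall t, Rabs t <= h ->
  is_derive f t (f' t) /\ is_derive f' t (f'' t) /\ Rabs (f'' t) <= M.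

Lemma derivative_odd_part_bound t : Rabs t <= h ->
  Rabs (f' t - f' (- t)) <= 2 * M * Rabs t.
Proof.
  intros Ht.
  assert (Hvar : forall s, Rabs s <= Rabs t ->
    is_derive f' s (f'' s) /\ Rabs (f'' s) <= M).
  { intros s Hs. destruct (f_C2 s) as [_ [Hd HM]]; [lra | auto]. }
  assert (Hpos := bounded_variation f' f'' M 0 t
    (fun s Hs => Hvar s ltac:(rewrite !Rminus_0_r in Hs; exact Hs))).
  assert (Hneg := bounded_variation f' f'' M 0 (- t)
    (fun s Hs => Hvar s ltac:(rewrite !Rminus_0_r, Rabs_Ropp in Hs; exact Hs))).
  rewrite !Rminus_0_r in Hpos, Hneg. rewrite Rabs_Ropp in Hneg.
  replace (f' t - f' (- t)) with ((f' t - f' 0) + - (f' (- t) - f' 0)) by ring.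
  pose proof (Rabs_triang (f' t - f' 0) (- (f' (- t) - f' 0))) as Htri.
  rewrite Rabs_Ropp in Htri. lra.
Qed.

Lemma second_difference_bound : 0 <= h ->
  Rabs (f h + f (- h) - 2 * f 0) <= 2 * M * h ^ 2.
Proof.
  intros Hh.
  replace (f h + f (- h) - 2 * f 0) with (f h + f (- h) - (f 0 + f (- 0)))
    by (rewrite Ropp_0; ring).
  replace (2 * M * h ^ 2) with (2 * M * h * Rabs (h - 0))
    by (rewrite Rminus_0_r, Rabs_pos_eq; [ring | lra]).
  apply (bounded_variation (fun s => f s + f (- s)) (fun s => f' s - f' (- s))).
  intros t Ht. rewrite !Rminus_0_r, (Rabs_pos_eq h Hh) in Ht. split.
  - apply (is_derive_plus f (fun s => f (- s)) t (f' t) (- f' (- t))).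
    + apply f_C2; lra.
    + replace (- f' (- t)) with (scal (-1) (f' (- t)))
        by (unfold scal; simpl; unfold mult; simpl; ring).
      apply (is_derive_comp f Ropp).
      * apply f_C2. rewrite Rabs_Ropp; lra.
      * auto_derive; auto.
  - pose proof (derivative_odd_part_bound t Ht).
    pose proof (Rabs_pos (f'' 0)); destruct (f_C2 0) as [_ [_ HM]]; [rewrite Rabs_R0; lra |].
    assert (2 * M * Rabs t <= 2 * M * h) by (apply Rmult_le_compat_l; lra). lra.
Qed.

End SecondDifference.

Lemma exists_pos_below (l : list R) : List.Forall (Rlt 0) l ->
  exists y, 0 < y /\ List.Forall (Rlt y) l.
Proof.
  induction 1 as [| a l Ha _ [y [Hy Hl]]].
  - exists 1. split; [lra | constructor].
  - exists (Rmin a y / 2). pose proof (Rmin_l a y). pose proof (Rmin_r a y).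
    pose proof (Rmin_pos a y Ha Hy). split; [lra | constructor; [lra |]].
    refine (List.Forall_impl _ _ Hl). intros b Hb. lra.
Qed.

Lemma cont_at2_bounded_near f p : cont_at2 f p ->
  exists d M, 0 < d /\ 0 < M /\ forall q : pt,
    Rabs (fst q - fst p) < d -> Rabs (snd q - snd p) < d -> Rabs (f q) <= M.
Proof.
  intros Hf. destruct (Hf 1) as [d [Hd Hq]]; [lra |].
  exists d, (Rabs (f p) + 1). split; [exact Hd | split; [pose proof (Rabs_pos (f p)); lra |]].
  intros q H1 H2. specialize (Hq q H1 H2).
  pose proof (Rabs_triang_inv (f q) (f p)). lra.
Qed.

Lemma cont_at2_pos_near f p : cont_at2 f p -> 0 < f p ->
  exists d, 0 < d /\ forall q : pt,
    Rabs (fst q - fst p) < d -> Rabs (snd q - snd p) < d -> f p / 2 < f q.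
Proof.
  intros Hf Hp. destruct (Hf (f p / 2)) as [d [Hd Hq]]; [lra |].
  exists d. split; [exact Hd |]. intros q H1 H2.
  pose proof (Hq q H1 H2) as Hc. apply Rabs_def2 in Hc. lra.
Qed.

Lemma open2_square r : open2 (fun p => Rabs (fst p) < r /\ Rabs (snd p) < r).
Proof.
  intros [x y] [Hx Hy]; simpl in *.
  exists (Rmin (r - Rabs x) (r - Rabs y)). split; [apply Rmin_pos; lra |].
  intros [x' y'] Hx' Hy'; simpl in *.
  pose proof (Rmin_l (r - Rabs x) (r - Rabs y)). pose proof (Rmin_r (r - Rabs x) (r - Rabs y)).
  pose proof (Rabs_triang_inv x' x). pose proof (Rabs_triang_inv y' y). lra.
Qed.

Lemma dphi1_eq x y : dphi1 (x, y) = x ^ 3.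
Proof.
  apply is_derive_unique. simpl.
  assert (H : is_derive (fun t => / 4 * (t ^ 4 + y ^ 4)) x (x ^ 3)) by (auto_derive; auto; field).
  exact H.
Qed.

Lemma dphi2_eq x y : dphi2 (x, y) = y ^ 3.
Proof.
  apply is_derive_unique. simpl.
  assert (H : is_derive (fun t => / 4 * (x ^ 4 + t ^ 4)) y (y ^ 3)) by (auto_derive; auto; field).
  exact H.
Qed.

Lemma sq_mul_le_cube_sum a b : 0 <= a -> 0 <= b -> a ^ 2 * b <= a ^ 3 + b ^ 3.
Proof.
  intros Ha Hb. destruct (Rle_dec a b).
  - assert (a ^ 2 <= b ^ 2) by nra. nra.
  - assert (b * b <= a * a) by nra. nra.
Qed.

Lemma coercivity_near_0 x y : Rabs x < 1/2 -> Rabs y < 1/2 ->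
  x ^ 3 * (x ^ 3 + x ^ 2 * y ^ 2) + y ^ 3 * y ^ 3 >=
  1/10 * (((x ^ 3 + x ^ 2 * y ^ 2) ^ 2 + (y ^ 3) ^ 2) + ((x ^ 3) ^ 2 + (y ^ 3) ^ 2)).
Proof.
  intros Hx Hy. apply Rabs_def2 in Hx. apply Rabs_def2 in Hy.
  set (a := x ^ 2). set (b := y ^ 2).
  assert (Ha : 0 <= a <= 1/4) by (unfold a; nra).
  assert (Hb : 0 <= b <= 1/4) by (unfold b; nra).
  assert (Hab : 0 <= a ^ 2 * b <= a ^ 3 + b ^ 3)
    by (split; [apply Rmult_le_pos; nra | apply sq_mul_le_cube_sum; lra]).
  (* The pairing is at least (a^3 + b^3)/2, the bracket on the right at most 7/2 (a^3 + b^3). *)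
  assert (Hpair : x ^ 3 * (x ^ 3 + a * b) + y ^ 3 * y ^ 3 >= / 2 * (a ^ 3 + b ^ 3)).
  { replace (x ^ 3 * (x ^ 3 + a * b) + y ^ 3 * y ^ 3) with (a ^ 3 + x * (a ^ 2 * b) + b ^ 3)
      by (unfold a, b; ring).
    nra. }
  assert (HX1 : (x ^ 3 + a * b) ^ 2 <= 2 * a ^ 3 + / 2 * (a ^ 2 * b)).
  { replace ((x ^ 3 + a * b) ^ 2) with (a ^ 2 * (x + b) ^ 2) by (unfold a; ring).
    assert ((x + b) ^ 2 <= 2 * (a + b ^ 2)) by (unfold a; pose proof (pow2_ge_0 (x - b)); nra).
    assert (a ^ 2 * b ^ 2 <= / 4 * (a ^ 2 * b)) by nra.
    assert (a ^ 2 * (x + b) ^ 2 <= a ^ 2 * (2 * (a + b ^ 2))) by (apply Rmult_le_compat_l; nra).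
    nra. }
  replace ((x ^ 3) ^ 2) with (a ^ 3) by (unfold a; ring).
  replace ((y ^ 3) ^ 2) with (b ^ 3) by (unfold b; ring).
  nra.
Qed.

Lemma dphi_X_coercive : exists (U : pt -> Prop) (delta : R),
  open2 U /\ U (0, 0) /\ 0 < delta /\
  forall p, U p ->
    dphi1 p * X1 p + dphi2 p * X2 p >=
    delta * ((X1 p ^ 2 + X2 p ^ 2) + (dphi1 p ^ 2 + dphi2 p ^ 2)).
Proof.
  exists (fun p => Rabs (fst p) < 1/2 /\ Rabs (snd p) < 1/2), (1/10).
  split; [apply open2_square | split; [simpl; rewrite Rabs_R0; lra | split; [lra |]]].
  intros [x y] [Hx Hy]. rewrite dphi1_eq, dphi2_eq. exact (coercivity_near_0 x y Hx Hy).
Qed.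

Lemma second_difference_on_parabola (g11 g21 : pt -> R) y : y <> 0 ->
  (forall x, x = 0 \/ x = y ^ 2 \/ x = - y ^ 2 ->
     x ^ 3 = g11 (x, y) * X1 (x, y) + g21 (x, y) * X2 (x, y)) ->
  g21 (y ^ 2, y) + g21 (- y ^ 2, y) - 2 * g21 (0, y) = - 2 * y ^ 3 * g11 (y ^ 2, y).
Proof.
  intros Hy Hid.
  pose proof (Hid 0 ltac:(tauto)) as E0.
  pose proof (Hid (y ^ 2) ltac:(tauto)) as Ep.
  pose proof (Hid (- y ^ 2) ltac:(tauto)) as Em.
  unfold X1, X2 in *; simpl in *.
  assert (Hy3 : y ^ 3 <> 0) by (apply pow_nonzero; exact Hy).
  apply (Rmult_eq_reg_r (y ^ 3)); [| exact Hy3]. nra.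
Qed.

Section NoMetricOnParabola.

Variables (g11 g21 : pt -> R) (r d M : R).
Hypothesis dphi1_dual : forall x y, Rabs x < r -> Rabs y < r ->
  x ^ 3 = g11 (x, y) * X1 (x, y) + g21 (x, y) * X2 (x, y).
Hypothesis g21_C2_in_x : forall x y, Rabs x < d -> Rabs y < d ->
  ex_derive (fun t => g21 (t, y)) x /\ ex_derive (fun t => pdx g21 (t, y)) x /\
  Rabs (pdx (pdx g21) (x, y)) <= M.

Lemma g11_on_parabola_le y : 0 < y < 1 -> y < r -> y < d -> g11 (y ^ 2, y) <= M * y.
Proof.
  intros Hy Hyr Hyd.
  assert (Hy2 : 0 < y ^ 2 < y) by (split; nra).
  assert (Hsd := second_difference_bound (fun t => g21 (t, y)) (fun t => pdx g21 (t, y))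
    (fun t => pdx (pdx g21) (t, y)) (y ^ 2) M).
  cbv beta in Hsd.
  assert (Hdual : forall x, x = 0 \/ x = y ^ 2 \/ x = - y ^ 2 ->
    x ^ 3 = g11 (x, y) * X1 (x, y) + g21 (x, y) * X2 (x, y)).
  { intros x Hx. apply dphi1_dual; [| rewrite Rabs_pos_eq; lra].
    destruct Hx as [-> | [-> | ->]];
      [rewrite Rabs_R0 | rewrite Rabs_pos_eq | rewrite Rabs_Ropp, Rabs_pos_eq]; lra. }
  rewrite (second_difference_on_parabola g11 g21 y) in Hsd by (lra || exact Hdual).
  assert (Hbound : Rabs (- 2 * y ^ 3 * g11 (y ^ 2, y)) <= 2 * M * (y ^ 2) ^ 2).
  { apply Hsd; [| lra]. intros t Ht.
    destruct (g21_C2_in_x t y) as [D1 [D2 HM]]; [lra | rewrite Rabs_pos_eq; lra |].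
    split; [apply (Derive_correct _ _ D1) | split; [apply (Derive_correct _ _ D2) | exact HM]]. }
  pose proof (Rle_abs (- (- 2 * y ^ 3 * g11 (y ^ 2, y)))) as Habs. rewrite Rabs_Ropp in Habs.
  assert (Hy3 : 0 < y ^ 3) by (apply pow_lt; lra).
  apply (Rmult_le_reg_l (2 * y ^ 3)); [lra | nra].
Qed.

End NoMetricOnParabola.

Lemma no_smooth_metric_dual_to_X : ~ (exists (U' : pt -> Prop) (g11 g12 g21 g22 : pt -> R),
  open2 U' /\ U' (0, 0) /\
  smooth_on U' g11 /\ smooth_on U' g12 /\
  smooth_on U' g21 /\ smooth_on U' g22 /\
  (forall p, U' p -> forall v1 v2 : R, (v1, v2) <> (0, 0) ->
      gform g11 g12 g21 g22 p v1 v2 v1 v2 > 0) /\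
  (forall p, U' p ->
      dphi1 p = gform g11 g12 g21 g22 p (X1 p) (X2 p) 1 0 /\
      dphi2 p = gform g11 g12 g21 g22 p (X1 p) (X2 p) 0 1)).
Proof.
  intros [U [g11 [g12 [g21 [g22 [HU [H0 [S11 [_ [S21 [_ [Hpos Hdual]]]]]]]]]]]].
  destruct (HU (0, 0) H0) as [r [Hr HUr]].
  assert (Hsq : forall x y, Rabs x < r -> Rabs y < r -> U (x, y))
    by (intros x y Hx Hy; apply HUr; simpl; rewrite !Rminus_0_r; assumption).
  assert (Hg0 : 0 < g11 (0, 0)).
  { assert (Hv : (1, 0) <> (0, 0)) by (intros E; injection E; lra).
    pose proof (Hpos (0, 0) H0 1 0 Hv). unfold gform in *. lra. }
  destruct (cont_at2_pos_near g11 (0, 0) (proj1 (S11 nil (0, 0) H0)) Hg0)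
    as [d2 [Hd2 Hnear]].
  destruct (cont_at2_bounded_near _ _ (proj1 (S21 (false :: false :: nil) (0, 0) H0)))
    as [d1 [M [Hd1 [HM Hbounded]]]].
  destruct (exists_pos_below (r :: d1 :: d2 :: 1 :: g11 (0, 0) / (2 * M) :: nil))
    as [y [Hy Hsmall]].
  { repeat constructor; try lra. apply Rdiv_lt_0_compat; lra. }
  rewrite !List.Forall_cons_iff in Hsmall. destruct Hsmall as [Hyr [Hyd1 [Hyd2 [Hy1 [HyM _]]]]].
  assert (Hle : g11 (y ^ 2, y) <= M * y).
  { apply (g11_on_parabola_le g11 g21 r (Rmin r d1)); try lra.
    - intros x y' Hx Hy'. destruct (Hdual (x, y') (Hsq x y' Hx Hy')) as [E _].
      rewrite dphi1_eq in E. unfold gform in E. rewrite E. ring.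
    - intros x y' Hx Hy'.
      pose proof (Rmin_l r d1). pose proof (Rmin_r r d1).
      assert (Hin : U (x, y')) by (apply Hsq; lra).
      split; [exact (proj1 (proj2 (S21 nil _ Hin))) |].
      split; [exact (proj1 (proj2 (S21 (false :: nil) _ Hin))) |].
      apply (Hbounded (x, y')); simpl; rewrite Rminus_0_r; lra.
    - apply Rmin_glb_lt; lra. }
  assert (Hy2 : 0 < y ^ 2 < y) by (split; nra).
  assert (Hfar := Hnear (y ^ 2, y)). cbn [fst snd] in Hfar.
  rewrite !Rminus_0_r, !Rabs_pos_eq in Hfar by lra.
  specialize (Hfar ltac:(lra) ltac:(lra)).
  assert (M * y < g11 (0, 0) / 2).
  { replace (g11 (0, 0) / 2) with (M * (g11 (0, 0) / (2 * M))) by (field; lra).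
    apply Rmult_lt_compat_l; lra. }
  lra.
Qed.

Theorem mainTheorem7 :
  (exists (U : pt -> Prop) (delta : R),
      open2 U /\ U (0, 0) /\ 0 < delta /\
      forall p, U p ->
        dphi1 p * X1 p + dphi2 p * X2 p >=
        delta * ((X1 p ^ 2 + X2 p ^ 2) + (dphi1 p ^ 2 + dphi2 p ^ 2)))
  /\
  ~ (exists (U' : pt -> Prop) (g11 g12 g21 g22 : pt -> R),
      open2 U' /\ U' (0, 0) /\
      smooth_on U' g11 /\ smooth_on U' g12 /\
      smooth_on U' g21 /\ smooth_on U' g22 /\
      (forall p, U' p -> forall v1 v2 : R, (v1, v2) <> (0, 0) ->
          gform g11 g12 g21 g22 p v1 v2 v1 v2 > 0) /\
      (forall p, U' p ->
          dphi1 p = gform g11 g12 g21 g22 p (X1 p) (X2 p) 1 0 /\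
          dphi2 p = gform g11 g12 g21 g22 p (X1 p) (X2 p) 0 1)).
Proof. split; [exact dphi_X_coercive | exact no_smooth_metric_dual_to_X]. Qed.
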